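(* Assume $\phi$ is convex and decreasing (i.e. $\phi(a)\ge\phi(b)$ whenever $a\le b$), and let $\mathbf{w}_{\mathrm{sup}}$ be a minimizer of $R_\phi$. Assume that for each $j=1,\dots,U$ the derivatives $\phi'(\mathbf{x}_{\mathrm{u},j}^\top\mathbf{w}_{\mathrm{sup}})$ and $\phi'(-\mathbf{x}_{\mathrm{u},j}^\top\mathbf{w}_{\mathrm{sup}})$ exist. Define $\mathbf{q}\in\mathbb{R}^U$ by $$q_j=\frac{\phi'(-\mathbf{x}_{\mathrm{u},j}^\top\mathbf{w}_{\mathrm{sup}})}{\phi'(\mathbf{x}_{\mathrm{u},j}^\top\mathbf{w}_{\mathrm{sup}})+\phi'(-\mathbf{x}_{\mathrm{u},j}^\top\mathbf{w}_{\mathrm{sup}})}$$ if the denominator is nonzero, and $q_j$ an arbitrary element of $[0,1]$ otherwise. Then $\mathbf{q}\in[0,1]^U$ and $\mathbf{w}_{\mathrm{sup}}$ is a minimizer of $R^{\mathrm{semi}}_\phi(\cdot,\mathbf{q})$. In particular $\mathbf{w}_{\mathrm{sup}}\in\mathcal{C}_\phi$.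
   Context: Fix integers $L,U,d\ge 1$. Let $\mathbf{X}\in\mathbb{R}^{L\times d}$ be a matrix whose rows $\mathbf{x}_1^\top,\dots,\mathbf{x}_L^\top$ are the labeled objects, with labels $\mathbf{y}\in\{-1,+1\}^L$. Let $\mathbf{X}_{\mathrm{u}}\in\mathbb{R}^{U\times d}$ be a matrix whose rows $\mathbf{x}_{\mathrm{u},1}^\top,\dots,\mathbf{x}_{\mathrm{u},U}^\top$ are the unlabeled objects. Let $\phi:\mathbb{R}\to\mathbb{R}$ be a loss function, $\Omega:\mathbb{R}^d\to\mathbb{R}$ a convex function and $\lambda\ge 0$. The supervised risk is $R_\phi(\mathbf{w})=\sum_{i=1}^L\phi(y_i\mathbf{x}_i^\top\mathbf{w})+\lambda\Omega(\mathbf{w})$. For responsibilities $\mathbf{q}\in[0,1]^U$ the semi-supervised risk is $R^{\mathrm{semi}}_\phi(\mathbf{w},\mathbf{q})=R_\phi(\mathbf{w})+\sum_{j=1}^U\big[q_j\phi(\mathbf{x}_{\mathrm{u},j}^\top\mathbf{w})+(1-q_j)\phi(-\mathbf{x}_{\mathrm{u},j}^\top\mathbf{w})\big]$. The constraint set is $\mathcal{C}_\phi=\{\mathbf{w}\in\mathbb{R}^d:\ \exists\,\mathbf{q}\in[0,1]^U \text{ such that } \mathbf{w} \text{ minimizes } R^{\mathrm{semi}}_\phi(\cdot,\mathbf{q})\}$. *)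

From Stdlib Require Import Reals.
From mathcomp Require Import ssreflect ssrfun ssrbool eqtype ssrnat fintype bigop.

Set Implicit Arguments.
Unset Strict Implicit.

Local Open Scope R_scope.

Definition vec (n : nat) := 'I_n -> R.

Definition dotp (n : nat) (x w : vec n) : R :=
  \big[Rplus/R0]_(k < n) (x k * w k).

Definition vadd (n : nat) (v w : vec n) : vec n := fun k => v k + w k.
Definition vscale (n : nat) (t : R) (v : vec n) : vec n := fun k => t * v k.

Definition convex_fun (f : R -> R) : Prop :=
  forall a b t, 0 <= t <= 1 -> f (t * a + (1 - t) * b) <= t * f a + (1 - t) * f b.

Definition convex_vfun (n : nat) (f : vec n -> R) : Prop :=
  forall v w t, 0 <= t <= 1 ->
    f (vadd (vscale t v) (vscale (1 - t) w)) <= t * f v + (1 - t) * f w.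

Definition decreasing_fun (f : R -> R) : Prop := forall a b, a <= b -> f b <= f a.

Definition is_minimizer (n : nat) (F : vec n -> R) (w : vec n) : Prop :=
  forall v, F w <= F v.

Definition Rsup (L d : nat) (X : 'I_L -> vec d) (y : 'I_L -> R)
  (phi : R -> R) (Omega : vec d -> R) (lambda : R) (w : vec d) : R :=
  \big[Rplus/R0]_(i < L) phi (y i * dotp (X i) w) + lambda * Omega w.

Definition Rsemi (L U d : nat) (X : 'I_L -> vec d) (y : 'I_L -> R)
  (Xu : 'I_U -> vec d) (phi : R -> R) (Omega : vec d -> R) (lambda : R)
  (q : 'I_U -> R) (w : vec d) : R :=
  Rsup X y phi Omega lambda w +
  \big[Rplus/R0]_(j < U) (q j * phi (dotp (Xu j) w)
                          + (1 - q j) * phi (- dotp (Xu j) w)).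

Definition Cset (L U d : nat) (X : 'I_L -> vec d) (y : 'I_L -> R)
  (Xu : 'I_U -> vec d) (phi : R -> R) (Omega : vec d -> R) (lambda : R)
  (w : vec d) : Prop :=
  exists q : 'I_U -> R, (forall j, 0 <= q j <= 1) /\
    is_minimizer (Rsemi X y Xu phi Omega lambda q) w.

(* For fixed q, the j-th unlabeled term t |-> q phi(t) + (1-q) phi(-t) is a convex
   function of t = x_{u,j}^T w, and the choice of q_j makes its derivative
   q_j phi'(t) - (1-q_j) phi'(-t) vanish at t = x_{u,j}^T w_sup.  A convex function
   lies above its tangent lines, so each unlabeled term is minimized at w_sup, as is
   the supervised part by assumption.  Since phi is decreasing, phi' <= 0, which is
   what makes q_j a convex weight. *)
From Stdlib Require Import Reals Lra.
From mathcomp Require Import ssreflect ssrfun ssrbool eqtype ssrnat fintype bigop.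

Set Implicit Arguments.
Unset Strict Implicit.

Local Open Scope R_scope.

Lemma derivable_pt_lim_le_slope (f : R -> R) (x l k c : R) :
  derivable_pt_lim f x l -> k <> 0 ->
  (forall s, 0 < s <= 1 -> f (x + s * k) - f x <= s * c) ->
  l * k <= c.
Proof.
move=> Hd Hk Hbound.
(* If c < l k, then for small s the increment f (x + s k) - f x is close to
   s l k, hence exceeds s c. *)
apply: Rnot_lt_le => Hlt.
have Ha : 0 < Rabs k by apply: Rabs_pos_lt.
have He : 0 < (l * k - c) / (2 * Rabs k) by apply: Rdiv_lt_0_compat; lra.
have [del Hdel] := Hd _ He.
have Hdel0 := cond_pos del.
set s := Rmin 1 (del / (2 * Rabs k)).
have Hs0 : 0 < s by apply: Rmin_pos; [lra | apply: Rdiv_lt_0_compat; lra].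
have Hs1 : s <= 1 by apply: Rmin_l.
have Hsk : s * Rabs k <= del / 2.
  have : s * Rabs k <= del / (2 * Rabs k) * Rabs k
    by apply: Rmult_le_compat_r; [lra | apply: Rmin_r].
  have -> : del / (2 * Rabs k) * Rabs k = del / 2 by field; lra.
  done.
have Hh : Rabs (s * k) = s * Rabs k by rewrite Rabs_mult Rabs_right; lra.
have Hh0 : s * k <> 0 by apply: Rmult_integral_contrapositive; split; lra.
have Hq := Hdel (s * k) Hh0 ltac:(lra).
have Hclose : Rabs (f (x + s * k) - f x - s * k * l) < s * (l * k - c) / 2.
  have -> : f (x + s * k) - f x - s * k * l
            = ((f (x + s * k) - f x) / (s * k) - l) * (s * k)
    by field; split; lra.
  rewrite Rabs_mult Hh.
  have := Rmult_lt_compat_r (s * Rabs k) _ _ ltac:(nra) Hq.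
  have -> : (l * k - c) / (2 * Rabs k) * (s * Rabs k) = s * (l * k - c) / 2
    by field; lra.
  done.
have := Hbound s ltac:(lra).
move: Hclose => /Rabs_def2 [_]; nra.
Qed.

Lemma convex_fun_tangent_le (f : R -> R) (t0 l t : R) :
  convex_fun f -> derivable_pt_lim f t0 l -> f t0 + l * (t - t0) <= f t.
Proof.
move=> Hc Hd.
have [-> | Ht] := Req_dec t t0; first lra.
suff : l * (t - t0) <= f t - f t0 by lra.
apply: (derivable_pt_lim_le_slope Hd); first lra.
move=> s Hs.
have := Hc t t0 s ltac:(lra).
have -> : s * t + (1 - s) * t0 = t0 + s * (t - t0) by ring.
lra.
Qed.

Lemma decreasing_derivable_pt_lim_le0 (f : R -> R) (x l : R) :
  decreasing_fun f -> derivable_pt_lim f x l -> l <= 0.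
Proof.
move=> Hdec Hd.
rewrite -(Rmult_1_r l).
apply: (derivable_pt_lim_le_slope Hd); first lra.
move=> s Hs; have := Hdec x (x + s * 1) ltac:(lra); lra.
Qed.

Lemma convex_fun_opp_arg (f : R -> R) :
  convex_fun f -> convex_fun (fun t => f (- t)).
Proof.
move=> Hc a b s Hs /=.
have -> : - (s * a + (1 - s) * b) = s * - a + (1 - s) * - b by ring.
exact: Hc.
Qed.

Lemma convex_fun_lincomb (f g : R -> R) (a b : R) :
  0 <= a -> 0 <= b -> convex_fun f -> convex_fun g ->
  convex_fun (fun t => a * f t + b * g t).
Proof.
move=> Ha Hb Hf Hg u v s Hs.
have := Rmult_le_compat_l a _ _ Ha (Hf u v s Hs).
have := Rmult_le_compat_l b _ _ Hb (Hg u v s Hs).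
lra.
Qed.

Definition mixed_loss (phi : R -> R) (q t : R) : R :=
  q * phi t + (1 - q) * phi (- t).

Lemma mixed_loss_critical_min (phi : R -> R) (q t dp dm : R) :
  convex_fun phi -> 0 <= q <= 1 ->
  derivable_pt_lim phi t dp -> derivable_pt_lim phi (- t) dm ->
  q * dp = (1 - q) * dm ->
  forall t', mixed_loss phi q t <= mixed_loss phi q t'.
Proof.
move=> Hc Hq Hdp Hdm Hcrit t'.
have Hconv : convex_fun (mixed_loss phi q).
  apply: convex_fun_lincomb; [lra | lra | exact: Hc | exact: convex_fun_opp_arg].
have Hder : derivable_pt_lim (mixed_loss phi q) t (q * dp + (1 - q) * (dm * -1)).
  apply: derivable_pt_lim_plus; apply: derivable_pt_lim_scal; first exact: Hdp.
  apply: (derivable_pt_lim_comp Ropp phi); last exact: Hdm.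
  exact: derivable_pt_lim_opp (derivable_pt_lim_id t).
have := convex_fun_tangent_le t' Hconv Hder.
have -> : q * dp + (1 - q) * (dm * -1) = 0 by lra.
lra.
Qed.

Lemma responsibility_weight (dp dm q : R) :
  dp <= 0 -> dm <= 0 ->
  (dp + dm <> 0 -> q = dm / (dp + dm)) ->
  (dp + dm = 0 -> 0 <= q <= 1) ->
  0 <= q <= 1 /\ q * dp = (1 - q) * dm.
Proof.
move=> Hp Hm Hq1 Hq2.
have [E | E] := Req_dec (dp + dm) 0.
  split; first exact: Hq2 E.
  have -> : dp = 0 by lra.
  have -> : dm = 0 by lra.
  ring.
rewrite (Hq1 E).
have Hn : 0 < - (dp + dm) by lra.
have -> : dm / (dp + dm) = - dm / - (dp + dm) by field.
split; last by field; lra.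
split; first by apply: Rle_mult_inv_pos; lra.
apply: (Rmult_le_reg_r (- (dp + dm))) => //.
have -> : - dm / - (dp + dm) * - (dp + dm) = - dm by field; lra.
lra.
Qed.

Theorem lemma2 (L U d : nat) (X : 'I_L -> vec d) (y : 'I_L -> R)
  (Xu : 'I_U -> vec d) (phi : R -> R) (Omega : vec d -> R) (lambda : R)
  (Hy : forall i, y i = 1 \/ y i = -1)
  (HOmega : convex_vfun Omega) (Hlambda : 0 <= lambda)
  (Hconv : convex_fun phi) (Hdec : decreasing_fun phi)
  (wsup : vec d) (Hmin : is_minimizer (Rsup X y phi Omega lambda) wsup)
  (dp dm : 'I_U -> R)
  (Hdp : forall j, derivable_pt_lim phi (dotp (Xu j) wsup) (dp j))
  (Hdm : forall j, derivable_pt_lim phi (- dotp (Xu j) wsup) (dm j))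
  (q : 'I_U -> R)
  (Hq1 : forall j, dp j + dm j <> 0 -> q j = dm j / (dp j + dm j))
  (Hq2 : forall j, dp j + dm j = 0 -> 0 <= q j <= 1) :
  (forall j, 0 <= q j <= 1) /\
  is_minimizer (Rsemi X y Xu phi Omega lambda q) wsup /\
  Cset X y Xu phi Omega lambda wsup.
Proof.
have Hweight j : 0 <= q j <= 1 /\ q j * dp j = (1 - q j) * dm j.
  apply: responsibility_weight _ _ (Hq1 j) (Hq2 j);
    exact: decreasing_derivable_pt_lim_le0 Hdec _.
have Hq j : 0 <= q j <= 1 by case: (Hweight j).
have Hsemi : is_minimizer (Rsemi X y Xu phi Omega lambda q) wsup.
  move=> v; apply: Rplus_le_compat; first exact: Hmin.
  elim/big_ind2: _ => [| ? ? ? ? | j _]; [exact: Rle_refl | exact: Rplus_le_compat |].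
  have [Hqj Hcrit] := Hweight j.
  exact: (mixed_loss_critical_min Hconv Hqj (Hdp j) (Hdm j) Hcrit).
by split; [| split; [| exists q]].
Qed.
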